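(* If $X\in \mathcal{B(H)}$ and $q \in \mathcal{D'}$, then \[ w_q \left(\begin{bmatrix} 0 & X\\ X & 0 \end{bmatrix}\right) \ge \frac{|q|}{2}\|X\|+ \frac{|q|}{2}\big|\|\mathcal{R}(X)\|-\|\mathcal{I}(X)\|\big|. \]
   Context: $\mathcal{H}$ is a complex Hilbert space, $\mathcal{B(H)}$ the bounded operators on it with operator norm; $2\times2$ operator matrices act on $\mathcal{H}\oplus\mathcal{H}$. $\mathcal{R}(X)=\frac{X+X^*}{2}$, $\mathcal{I}(X)=\frac{X-X^*}{2i}$. $\mathcal{D}$ is the closed unit disc in $\mathbb{C}$, $\mathcal{D'}=\mathcal{D}\setminus\{0\}$. $w_q(T)=\sup\{|\langle Tx,y\rangle| : \|x\|=\|y\|=1,\ \langle x,y\rangle=q\}$. *)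

From HB Require Import structures.
From mathcomp Require Import all_boot all_order all_algebra.
From mathcomp Require Import all_classical all_reals.
From mathcomp Require Import complex.
Set Implicit Arguments.
Unset Strict Implicit.
Unset Printing Implicit Defensive.
Import Order.TTheory GRing.Theory Num.Theory.
Local Open Scope ring_scope.
Local Open Scope classical_set_scope.

Definition cabs (R : realType) (z : R[i]) : R :=
  Num.sqrt (complex.Re z ^+ 2 + complex.Im z ^+ 2).

Record chilbert (R : realType) := CHilbert {
  hcar :> lmodType R[i];
  hinner : hcar -> hcar -> R[i];
  hinnerDl : forall (a : R[i]) (x y z : hcar),
      hinner (a *: x + y) z = a * hinner x z + hinner y z;
  hinner_conj : forall x y : hcar, hinner y x = complex.conjc (hinner x y);
  hinner_ge0 : forall x : hcar, 0 <= hinner x x;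
  hinner_eq0 : forall x : hcar, hinner x x = 0 -> x = 0;
  hcomplete : forall u : nat -> hcar,
      (forall e : R, 0 < e -> exists N, forall m n, (N <= m)%N -> (N <= n)%N ->
          cabs (hinner (u m - u n) (u m - u n)) < e ^+ 2) ->
      exists l : hcar, forall e : R, 0 < e -> exists N, forall n, (N <= n)%N ->
          cabs (hinner (u n - l) (u n - l)) < e ^+ 2
}.

Section Ops.
Variables (R : realType) (H : chilbert R).

Definition hnorm (x : H) : R := Num.sqrt (complex.Re (hinner x x)).

Definition bounded_op (X : H -> H) : Prop :=
  (forall (a : R[i]) (x y : H), X (a *: x + y) = a *: X x + X y) /\
  exists M : R, forall x : H, hnorm (X x) <= M * hnorm x.

Definition opnorm (X : H -> H) : R :=
  sup [set hnorm (X x) | x in [set x : H | hnorm x <= 1]].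

Definition is_adjoint (X Xs : H -> H) : Prop :=
  forall x y : H, hinner (X x) y = hinner x (Xs y).

Definition re_op (X Xs : H -> H) : H -> H :=
  fun x => (2 : R[i])^-1 *: (X x + Xs x).
Definition im_op (X Xs : H -> H) : H -> H :=
  fun x => ((2 : R[i]) * 'i%C)^-1 *: (X x - Xs x).

Definition dsum_inner (x y : H * H) : R[i] :=
  hinner x.1 y.1 + hinner x.2 y.2.

Definition opmx (A B C D : H -> H) : H * H -> H * H :=
  fun x => (A x.1 + B x.2, C x.1 + D x.2).

Definition zero_op : H -> H := fun _ => 0.

Definition wq_dsum (q : R[i]) (T : H * H -> H * H) : R :=
  sup [set cabs (dsum_inner (T p.1) p.2) | p in
         [set p : (H * H) * (H * H) |
            dsum_inner p.1 p.1 = 1 /\ dsum_inner p.2 p.2 = 1 /\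
            dsum_inner p.1 p.2 = q]].
End Ops.

From HB Require Import structures.
From mathcomp Require Import all_boot all_order all_algebra.
From mathcomp Require Import all_classical all_reals.
From mathcomp Require Import complex.
From mathcomp Require Import ring lra.
Import Order.TTheory GRing.Theory Num.Theory.
Set Implicit Arguments.
Unset Strict Implicit.
Unset Printing Implicit Defensive.
Local Open Scope ring_scope.

(* Let S = w_q(T) with T = [[0, X], [X, 0]].  For ||u||^2 = 1/2 and
   s = sqrt (1 - |q|^2), the unit vectors x = (u, u) and
   y = ((q^* + s) u, (q^* - s) u) satisfy <x, y> = q and
   <T x, y> = 2 q <X u, u>, so |q| w(X) <= S for the numerical radius w.
   Polarization gives ||R(X)|| <= w(X), and ||I(X)|| = ||R(-iX)|| <= w(X).
   Since ||X|| <= ||R(X)|| + ||I(X)||, the left-hand side is at most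
   |q| max (||R(X)||, ||I(X)||) <= |q| w(X) <= S. *)

Local Notation hnorm2 x := (complex.Re (hinner x x)).

Section ComplexNumbers.
Variable R : realType.
Implicit Types (a b : R[i]) (c : R).

Lemma cabsE a : (cabs a)%:C%C = `|a|.
Proof. by rewrite normc_def. Qed.

Lemma cabs_ge0 a : 0 <= cabs a.
Proof. exact: sqrtr_ge0. Qed.

Lemma sqr_cabs a : cabs a ^+ 2 = complex.Re a ^+ 2 + complex.Im a ^+ 2.
Proof. by rewrite sqr_sqrtr // addr_ge0 ?sqr_ge0. Qed.

Lemma cabs0 : cabs (0 : R[i]) = 0.
Proof. by rewrite /cabs /= expr0n addr0 sqrtr0. Qed.

Lemma cabsD a b : cabs (a + b) <= cabs a + cabs b.
Proof. by rewrite -lecR rmorphD /= !cabsE ler_normD. Qed.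

Lemma cabsM a b : cabs (a * b) = cabs a * cabs b.
Proof. by apply: complexI; rewrite rmorphM /= !cabsE normrM. Qed.

Lemma cabsMn a n : cabs (a *+ n) = cabs a *+ n.
Proof. by apply: complexI; rewrite raddfMn /= !cabsE normrMn. Qed.

Lemma cabsN a : cabs (- a) = cabs a.
Proof. by apply: complexI; rewrite !cabsE normrN. Qed.

Lemma cabs_real c : 0 <= c -> cabs c%:C%C = c.
Proof. by move=> c0; apply: complexI; rewrite cabsE ger0_norm ?ler0c. Qed.

Lemma cabs_i : cabs ('i%C : R[i]) = 1.
Proof. by rewrite /cabs /= expr0n expr1n add0r sqrtr1. Qed.

Lemma cabs_gt0 a : (0 < cabs a) = (a != 0).
Proof. by rewrite -ltcR cabsE normr_gt0. Qed.

Lemma normr_Re_le_cabs a : `|complex.Re a| <= cabs a.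
Proof. by rewrite -sqrtr_sqr ler_sqrt ?addr_ge0 ?sqr_ge0 // lerDl sqr_ge0. Qed.

Lemma neq0_i : ('i%C : R[i]) != 0.
Proof. by rewrite eq_complex /= oner_eq0 andbF. Qed.

Lemma conjc_i : conjc ('i%C : R[i]) = - 'i%C.
Proof. by apply/eqP; rewrite eq_complex /= oppr0 !eqxx. Qed.

Lemma invC2 : (2 : R[i])^-1 = (2^-1 : R)%:C%C.
Proof. by rewrite fmorphV rmorph_nat. Qed.

End ComplexNumbers.

Section InnerProduct.
Variables (R : realType) (H : chilbert R).
Implicit Types (x y z : H) (a : R[i]).

Lemma hinnerlD x y z : hinner (x + y) z = hinner x z + hinner y z.
Proof. by have := hinnerDl 1 x y z; rewrite scale1r mul1r. Qed.

Lemma hinnerl0 z : hinner 0 z = 0.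
Proof. by apply: (addrI (hinner 0 z)); rewrite -hinnerlD !addr0. Qed.

Lemma hinnerlZ a x z : hinner (a *: x) z = a * hinner x z.
Proof. by rewrite -[a *: x]addr0 hinnerDl hinnerl0 addr0. Qed.

Lemma hinnerlN x z : hinner (- x) z = - hinner x z.
Proof. by rewrite -scaleN1r hinnerlZ mulN1r. Qed.

Lemma hinnerlB x y z : hinner (x - y) z = hinner x z - hinner y z.
Proof. by rewrite hinnerlD hinnerlN. Qed.

Lemma hinnerr0 z : hinner z 0 = 0.
Proof. by rewrite hinner_conj hinnerl0 rmorph0. Qed.

Lemma hinnerrD x y z : hinner z (x + y) = hinner z x + hinner z y.
Proof. by rewrite hinner_conj hinnerlD rmorphD /= -!hinner_conj. Qed.

Lemma hinnerrZ a x z : hinner z (a *: x) = conjc a * hinner z x.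
Proof. by rewrite hinner_conj hinnerlZ rmorphM /= -!hinner_conj. Qed.

Lemma hinnerrN x z : hinner z (- x) = - hinner z x.
Proof. by rewrite hinner_conj hinnerlN rmorphN /= -!hinner_conj. Qed.

Lemma hinnerrB x y z : hinner z (x - y) = hinner z x - hinner z y.
Proof. by rewrite hinnerrD hinnerrN. Qed.

Lemma hinner_self x : hinner x x = (hnorm2 x)%:C%C.
Proof.
have := hinner_ge0 x; case: (hinner x x) => a b.
by rewrite lecE /= => /andP[/eqP ->].
Qed.

Lemma hnorm2_ge0 x : 0 <= hnorm2 x.
Proof. by have := hinner_ge0 x; rewrite lecE => /andP[]. Qed.

Lemma hnorm2_eq0 x : hnorm2 x = 0 -> x = 0.
Proof. by move=> h; apply: hinner_eq0; rewrite hinner_self h. Qed.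

Lemma sqr_hnorm x : hnorm x ^+ 2 = hnorm2 x.
Proof. by rewrite sqr_sqrtr // hnorm2_ge0. Qed.

Lemma hnorm_ge0 x : 0 <= hnorm x.
Proof. exact: sqrtr_ge0. Qed.

Lemma hnorm_le1 x : (hnorm x <= 1) = (hnorm2 x <= 1).
Proof. by rewrite /hnorm -{1}sqrtr1 ler_sqrt. Qed.

Lemma hnorm0 : hnorm (0 : H) = 0.
Proof. by rewrite /hnorm hinnerl0 sqrtr0. Qed.

Lemma hnorm2Z a x : hnorm2 (a *: x) = cabs a ^+ 2 * hnorm2 x.
Proof.
rewrite hinnerlZ hinnerrZ hinner_self sqr_cabs.
by case: a => a b /=; rewrite !mulr0 !expr2; ring.
Qed.

Lemma hnormZ a x : hnorm (a *: x) = cabs a * hnorm x.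
Proof.
by rewrite /hnorm hnorm2Z sqrtrM ?sqr_ge0 // sqrtr_sqr ger0_norm ?cabs_ge0.
Qed.

Lemma hnorm2D x y :
  hnorm2 (x + y) = hnorm2 x + hnorm2 y + 2 * complex.Re (hinner x y).
Proof.
rewrite hinnerlD !hinnerrD (hinner_conj x y) !raddfD /=.
by case: (hinner x y) => a b /=; ring.
Qed.

Lemma hinner_sqr_le x y :
  complex.Re (hinner x y) ^+ 2 + complex.Im (hinner x y) ^+ 2 <=
  hnorm2 x * hnorm2 y.
Proof.
have [y0|ny] := eqVneq (hnorm2 y) 0.
  by rewrite (hnorm2_eq0 y0) hinnerr0 hinnerl0 /= expr0n addr0 mulr0.
have ny_gt0 : 0 < hnorm2 y by rewrite lt_def ny hnorm2_ge0.
have := hnorm2_ge0 ((hnorm2 y)%:C%C *: x - hinner x y *: y).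
rewrite !(hinnerlB, hinnerrB, hinnerlZ, hinnerrZ) (hinner_self x).
rewrite (hinner_self y) [hinner y x]hinner_conj.
move: (hnorm2 x) (hnorm2 y) ny_gt0 => m n n_gt0.
case: (hinner x y) => a b /= h; nra.
Qed.

Lemma cauchy_schwarz x y : cabs (hinner x y) <= hnorm x * hnorm y.
Proof.
by rewrite -sqrtrM ?hnorm2_ge0 // ler_sqrt ?mulr_ge0 ?hnorm2_ge0 ?hinner_sqr_le.
Qed.

Lemma ler_hnormD x y : hnorm (x + y) <= hnorm x + hnorm y.
Proof.
have hxy_ge0 := addr_ge0 (hnorm_ge0 x) (hnorm_ge0 y).
rewrite -(ger0_norm hxy_ge0) -sqrtr_sqr ler_sqrt ?sqr_ge0 // hnorm2D.
have := le_trans (normr_Re_le_cabs _) (cauchy_schwarz x y).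
by rewrite sqrrD -!sqr_hnorm => /ler_normlP[_]; lra.
Qed.
End InnerProduct.

Definition numrad_le (R : realType) (H : chilbert R) (Y : H -> H) (K : R) :=
  forall x : H, cabs (hinner (Y x) x) <= K * hnorm x ^+ 2.

Section RealPart.
Variables (R : realType) (H : chilbert R) (Y Ys : H -> H).
Hypotheses (Ylin : linear Y) (Yadj : is_adjoint Y Ys).
Variable K : R.
Hypotheses (K_ge0 : 0 <= K) (YK : numrad_le Y K).

HB.instance Definition _ := GRing.isLinear.Build R[i] H H *:%R Y Ylin.

Lemma Re_hinner_sym_le u v :
  complex.Re (hinner (Y u) v) + complex.Re (hinner (Y v) u) <=
  K * (hnorm2 u + hnorm2 v).
Proof.
have polar : hinner (Y (u + v)) (u + v) - hinner (Y (u - v)) (u - v) =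
             (hinner (Y u) v + hinner (Y v) u) *+ 2.
  rewrite (raddfD Y) (raddfB Y) mulr2n.
  rewrite !(hinnerlD, hinnerlB, hinnerrD, hinnerrB, hinnerlN, hinnerrN).
  by ring.
have parallelogram :
    hnorm2 (u + v) + hnorm2 (u - v) = (hnorm2 u + hnorm2 v) *+ 2.
  rewrite !(hinnerlD, hinnerlB, hinnerrD, hinnerrB, hinnerlN, hinnerrN).
  by rewrite !(raddfD, raddfN) /= mulr2n; ring.
have Re_polar : complex.Re (hinner (Y (u + v)) (u + v)) -
                complex.Re (hinner (Y (u - v)) (u - v)) =
    (complex.Re (hinner (Y u) v) + complex.Re (hinner (Y v) u)) *+ 2.
  by rewrite -raddfB polar raddfMn raddfD.
have /ler_normlP[_ +] := le_trans (normr_Re_le_cabs _) (YK (u + v)).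
have /ler_normlP[+ _] := le_trans (normr_Re_le_cabs _) (YK (u - v)).
move: parallelogram Re_polar; rewrite !sqr_hnorm !mulr2n; nra.
Qed.

Lemma Re_hinner_re_op u v : complex.Re (hinner (re_op Y Ys u) v) =
  (complex.Re (hinner (Y u) v) + complex.Re (hinner (Y v) u)) / 2.
Proof.
rewrite /re_op hinnerlZ hinnerlD invC2 [hinner (Ys u) v]hinner_conj -Yadj.
case: (hinner (Y u) v) (hinner (Y v) u) => [a b] [c d] /=; ring.
Qed.

Lemma hnorm_re_op_le u : hnorm u <= 1 -> hnorm (re_op Y Ys u) <= K.
Proof.
move=> u_le1; set a := re_op Y Ys u.
have [a0|a_neq0] := eqVneq (hnorm a) 0; first by rewrite a0.
pose v := ((hnorm a)^-1)%:C%C *: a.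
have v1 : hnorm2 v = 1.
  rewrite hnorm2Z cabs_real ?invr_ge0 ?hnorm_ge0 // -sqr_hnorm -exprMn.
  by rewrite mulVf ?expr1n.
have Re_av : complex.Re (hinner a v) = hnorm a.
  rewrite hinnerrZ conjc_real hinner_self /= mulr0 subr0 -sqr_hnorm.
  by rewrite expr2 mulKf.
have := Re_hinner_sym_le u v; rewrite v1 -sqr_hnorm.
have := Re_hinner_re_op u v; rewrite -/a Re_av.
have /(ler_wpM2l K_ge0) : hnorm u ^+ 2 <= 1 by rewrite exprn_ile1 ?hnorm_ge0.
lra.
Qed.
End RealPart.

Section OperatorNorm.
Variables (R : realType) (H : chilbert R) (A : H -> H) (K : R).
Hypothesis AK : forall u : H, hnorm u <= 1 -> hnorm (A u) <= K.

Lemma opnorm_le : opnorm A <= K.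
Proof.
apply: ge_sup; first by exists (hnorm (A 0)), 0; rewrite //= hnorm0 ler01.
by move=> _ [u u_le1 <-]; apply: AK.
Qed.

Lemma hnorm_le_opnorm u : hnorm u <= 1 -> hnorm (A u) <= opnorm A.
Proof.
move=> u_le1; apply: ub_le_sup; last by exists u.
by exists K => _ [v v_le1 <-]; apply: AK.
Qed.
End OperatorNorm.

Lemma re_im_opE (R : realType) (H : chilbert R) (X Xs : H -> H) x :
  X x = re_op X Xs x + 'i%C *: im_op X Xs x.
Proof.
rewrite /re_op /im_op scalerA invfM mulrCA mulfV ?neq0_i // mulr1.
rewrite -scalerDr addrACA subrr addr0 -mulr2n -scalerMnr scalerMnl -mulr_natr.
by rewrite mulVf ?pnatr_eq0 // scale1r.
Qed.

Lemma im_opE (R : realType) (H : chilbert R) (X Xs : H -> H) :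
  im_op X Xs = re_op (fun x => - ('i%C *: X x)) (fun x => 'i%C *: Xs x).
Proof.
apply: boolp.funext => x; rewrite /re_op /im_op -scalerN -scalerDr.
rewrite [- X x + _]addrC -opprB.
rewrite scalerN -scaleNr scalerA invfM -mulrN; congr (_ * _ *: _).
by apply: (mulfI (@neq0_i R)); rewrite mulrN mulfV ?neq0_i // -expr2 sqr_i.
Qed.

Section ReImBounds.
Variables (R : realType) (H : chilbert R) (X Xs : H -> H).
Hypotheses (Xlin : linear X) (Xadj : is_adjoint X Xs).
Variable K : R.
Hypotheses (K_ge0 : 0 <= K) (XK : numrad_le X K).

Lemma hnorm_im_op_le u : hnorm u <= 1 -> hnorm (im_op X Xs u) <= K.
Proof.
have Ylin : linear (fun x => - ('i%C *: X x)).
  by move=> a x y; rewrite Xlin scalerDr opprD scalerN !scalerA mulrC.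
have Yadj : is_adjoint (fun x => - ('i%C *: X x)) (fun x => 'i%C *: Xs x).
  by move=> x y; rewrite hinnerlN hinnerlZ hinnerrZ Xadj conjc_i mulNr.
have YK : numrad_le (fun x => - ('i%C *: X x)) K.
  by move=> x; rewrite hinnerlN hinnerlZ cabsN cabsM cabs_i mul1r.
by rewrite im_opE; apply: hnorm_re_op_le.
Qed.

Lemma opnorm_re_op_le : opnorm (re_op X Xs) <= K.
Proof. exact/opnorm_le/hnorm_re_op_le. Qed.

Lemma opnorm_im_op_le : opnorm (im_op X Xs) <= K.
Proof. exact/opnorm_le/hnorm_im_op_le. Qed.

Lemma opnorm_le_re_im : opnorm X <= opnorm (re_op X Xs) + opnorm (im_op X Xs).
Proof.
apply: opnorm_le => u u_le1; rewrite (re_im_opE X Xs).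
apply: (le_trans (ler_hnormD _ _)); rewrite hnormZ cabs_i mul1r.
by apply: lerD; apply: (@hnorm_le_opnorm _ _ _ K) u_le1;
  [exact: hnorm_re_op_le | exact: hnorm_im_op_le].
Qed.
End ReImBounds.

Section QNumericalRadius.
Variables (R : realType) (H : chilbert R) (X : H -> H) (q : R[i]).
Hypothesis Xb : bounded_op X.
Local Notation T := (opmx (@zero_op R H) X X (@zero_op R H)).

HB.instance Definition _ := GRing.isLinear.Build R[i] H H *:%R X Xb.1.

Lemma dsum_inner_offdiag x y :
  dsum_inner (T x) y = hinner (X x.2) y.1 + hinner (X x.1) y.2.
Proof. by rewrite /dsum_inner /opmx /zero_op /= !add0r !addr0. Qed.

Lemma dsum_unit_le1 (x : H * H) :
  dsum_inner x x = 1 -> hnorm x.1 <= 1 /\ hnorm x.2 <= 1.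
Proof.
move=> /(congr1 (@complex.Re R)); rewrite raddfD /= => x1.
have := hnorm2_ge0 x.1; have := hnorm2_ge0 x.2.
by rewrite !hnorm_le1; lra.
Qed.

Lemma has_ubound_wq_dsum :
  has_ubound [set cabs (dsum_inner (T p.1) p.2) | p in
    [set p : (H * H) * (H * H) | dsum_inner p.1 p.1 = 1 /\
       dsum_inner p.2 p.2 = 1 /\ dsum_inner p.1 p.2 = q]].
Proof.
have [M XM] := Xb.2.
have XM1 (x y : H) :
    hnorm x <= 1 -> hnorm y <= 1 -> cabs (hinner (X x) y) <= `|M|.
  move=> x1 y1; apply: (le_trans (cauchy_schwarz _ _)).
  apply: (le_trans (ler_piMr (hnorm_ge0 _) y1)); apply: (le_trans (XM x)).
  have := hnorm_ge0 x; have := ler_norm M; have := normr_ge0 M; nra.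
exists (`|M| *+ 2).
move=> _ [[x y] [/= /dsum_unit_le1[x1 x2] [/dsum_unit_le1[y1 y2] _]] <-].
rewrite dsum_inner_offdiag mulr2n; apply: (le_trans (cabsD _ _)).
by apply: lerD; apply: XM1.
Qed.

Lemma wq_dsum_ge x y : dsum_inner x x = 1 -> dsum_inner y y = 1 ->
  dsum_inner x y = q -> cabs (dsum_inner (T x) y) <= wq_dsum q T.
Proof.
by move=> x1 y1 xy; apply: ub_le_sup has_ubound_wq_dsum _ _; exists (x, y).
Qed.

Lemma wq_dsum_ge0 : 0 <= wq_dsum q T.
Proof.
rewrite /wq_dsum; set E := (S in sup S).
have [->|/set0P[e Ee]] := eqVneq E set0; first by rewrite sup0.
apply: le_trans (ub_le_sup has_ubound_wq_dsum Ee).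
by case: Ee => p _ <-; apply: cabs_ge0.
Qed.

Lemma wq_dsum_ge_half u : hinner u u = 2^-1 -> cabs q <= 1 ->
  (cabs q * cabs (hinner (X u) u)) *+ 2 <= wq_dsum q T.
Proof.
move=> u_half q_le1; pose s := Num.sqrt (1 - cabs q ^+ 2).
have s2 : s ^+ 2 = 1 - cabs q ^+ 2.
  by rewrite sqr_sqrtr // subr_ge0 exprn_ile1 ?cabs_ge0.
pose a := conjc q + s%:C%C; pose b := conjc q - s%:C%C.
have conj_ab : conjc a + conjc b = 2 * q.
  by rewrite /a /b; case: (q) => qa qb; simpc; congr (Complex _ _); ring.
have norm_ab : a * conjc a + b * conjc b = 2.
  move: s2; rewrite /a /b sqr_cabs; case: (q) => qa qb /= s2.
  by simpc; congr (Complex _ _); lra.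
apply: le_trans (wq_dsum_ge (x := (u, u)) (y := (a *: u, b *: u)) _ _ _).
- rewrite dsum_inner_offdiag /= !hinnerrZ -mulrDl conj_ab cabsM.
  by rewrite mulr_natl cabsMn mulrnAl.
- by rewrite /dsum_inner /= u_half {3}(splitr 1) mul1r.
- rewrite /dsum_inner /= !hinnerlZ !hinnerrZ u_half !mulrA -mulrDl norm_ab.
  by rewrite mulfV ?pnatr_eq0.
- rewrite /dsum_inner /= !hinnerrZ u_half -mulrDl conj_ab.
  by rewrite mulrC mulKf ?pnatr_eq0.
Qed.

Lemma cabs_hinner_le_wq_dsum w : cabs q <= 1 ->
  cabs q * cabs (hinner (X w) w) <= wq_dsum q T * hnorm w ^+ 2.
Proof.
move=> q_le1; have [w0|w_neq0] := eqVneq (hnorm w) 0.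
  have /hnorm2_eq0 -> : hnorm2 w = 0 by rewrite -sqr_hnorm w0 expr0n.
  by rewrite raddf0 hinnerl0 cabs0 mulr0 hnorm0 expr0n /= mulr0.
pose k := (Num.sqrt 2 * hnorm w)^-1.
have k_ge0 : 0 <= k by rewrite invr_ge0 mulr_ge0 ?sqrtr_ge0 ?hnorm_ge0.
have k2 : k ^+ 2 * hnorm w ^+ 2 = 2^-1.
  by rewrite /k exprVn exprMn sqr_sqrtr ?ler0n //; field.
have u_half : hinner (k%:C%C *: w) (k%:C%C *: w) = 2^-1.
  by rewrite hinner_self hnorm2Z cabs_real // -sqr_hnorm k2 invC2.
have := wq_dsum_ge_half u_half q_le1.
rewrite linearZ /= hinnerlZ hinnerrZ conjc_real mulrA -rmorphM cabsM.
rewrite cabs_real ?mulr_ge0 //.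
rewrite -mulr_natr => /(ler_wpM2r (sqr_ge0 (hnorm w))).
have := congr1 ( *%R (cabs q * cabs (hinner (X w) w))) k2.
lra.
Qed.

Lemma numrad_le_wq_dsum : q != 0 -> cabs q <= 1 ->
  numrad_le X (wq_dsum q T / cabs q).
Proof.
move=> q_neq0 q_le1 w; have q_gt0 : 0 < cabs q by rewrite cabs_gt0.
by rewrite mulrAC ler_pdivlMr // mulrC cabs_hinner_le_wq_dsum.
Qed.
End QNumericalRadius.

Theorem corollary3p8 (R : realType) (H : chilbert R) (X Xs : H -> H)
  (hX : bounded_op X) (hXs : is_adjoint X Xs)
  (q : R[i]) (hq0 : q != 0) (hq1 : cabs q <= 1) :
  wq_dsum q (opmx (@zero_op R H) X X (@zero_op R H)) >=
    cabs q / 2 * opnorm X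
    + cabs q / 2 * `| opnorm (re_op X Xs) - opnorm (im_op X Xs) |.
Proof.
set w := wq_dsum _ _; set K := w / cabs q.
have q_gt0 : 0 < cabs q by rewrite cabs_gt0.
have K_ge0 : 0 <= K by rewrite divr_ge0 ?wq_dsum_ge0 ?cabs_ge0.
have XK : numrad_le X K := numrad_le_wq_dsum hX hq0 hq1.
have reK := opnorm_re_op_le hX.1 hXs K_ge0 XK.
have imK := opnorm_im_op_le hX.1 hXs K_ge0 XK.
have X_le := opnorm_le_re_im hX.1 hXs K_ge0 XK.
have -> : w = cabs q * K by rewrite mulrC divfK ?gt_eqF.
move: (opnorm (re_op X Xs)) (opnorm (im_op X Xs)) reK imK X_le.
move=> a b aK bK X_le.
have : `|a - b| <= K *+ 2 - a - b by rewrite ler_norml; apply/andP; split; lra.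
nra.
Qed.
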